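(* Let $q$ be an odd prime power, $n=2^v$ with $v\ge1$, and $t$ an integer with $qt\equiv t\pmod{2^v}$ and $\nu_2(t)<v$. Type-I duadic splittings of $\mathbb{Z}_{2^v}$ given by $\tau_t$ exist if and only if $\nu_2(t)<\nu_2(q-1)$.
   Context: $\mu_q:\mathbb{Z}_n\to\mathbb{Z}_n$, $i\mapsto qi\bmod n$; $P$ is $\mu_q$-invariant if $\mu_q(P)=P$. $\tau_t:\mathbb{Z}_n\to\mathbb{Z}_n$, $i\mapsto i+t\bmod n$ (a $q$-translation). Type-I duadic splittings of $\mathbb{Z}_n$ given by $\tau_t$ exist if there is a $\mu_q$-invariant $P$ with $\mathbb{Z}_n=P\cup\tau_t(P)$ a disjoint union. $\nu_2$ is the $2$-adic valuation. *)

From mathcomp Require Import all_boot all_order all_algebra.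
Set Implicit Arguments. Unset Strict Implicit. Unset Printing Implicit Defensive.
Import GRing.Theory Num.Theory.

(* Z_n is represented by 'I_n (residues 0..n-1). *)

Lemma ord_mod_lt (n : nat) (i : 'I_n) (m : nat) : m %% n < n.
Proof. by rewrite ltn_pmod // (leq_ltn_trans (leq0n i) (ltn_ord i)). Qed.

Definition mu (n q : nat) (i : 'I_n) : 'I_n := Ordinal (ord_mod_lt i (q * i)).

Definition tau (n : nat) (t : int) (i : 'I_n) : 'I_n :=
  Ordinal (ord_mod_lt i (i + `|(t %% n%:Z)%Z|%N)).

Definition mu_invariant (n q : nat) (P : {set 'I_n}) : Prop :=
  [set mu q i | i in P] = P.

Definition splits_by (n : nat) (t : int) (P : {set 'I_n}) : Prop :=
  P :|: [set tau t i | i in P] = [set: 'I_n] /\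
  [disjoint P & [set tau t i | i in P]].

Definition typeI_duadic_exists (n q : nat) (t : int) : Prop :=
  exists P : {set 'I_n}, mu_invariant q P /\ splits_by t P.

Definition nu2 (t : int) : nat := logn 2 `|t|%N.

Definition prime_power (q : nat) : Prop :=
  exists p k, prime p /\ 0 < k /\ q = p ^ k.

From mathcomp Require Import all_boot all_order all_algebra zify.
Import GRing.Theory.

(* Let T be the residue of t modulo 2^v, so that s = nu2 t = nu2 T, and d = nu2 (q - 1).
   For a splitting P, tau_t moves every point across P, while mu_q, a bijection
   fixing P, keeps every point on its side.
   If d <= s, write q - 1 = u 2^d with u odd and put x = T / 2^d: then q x = x + u T,
   so mu_q(x) = tau_t^u(x) with u odd, a contradiction.
   If s < d, then q = 1 and T = 2^s modulo 2^(s+1), so the points whose remainder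
   modulo 2^(s+1) is below 2^s form a mu_q-invariant splitting. *)

Set Implicit Arguments.
Unset Strict Implicit.
Unset Printing Implicit Defensive.

Lemma partition_setC (T : finType) (A B : {set T}) :
  A :|: B = setT /\ [disjoint A & B] <-> B = ~: A.
Proof.
split=> [[AUB dAB]|->]; last by rewrite setUCr disjoints_subset setCK.
apply/setP=> x; rewrite inE; have := in_setT x; rewrite -AUB inE.
by case: (x \in A) (disjointFr dAB (x:=x)) => // ->.
Qed.

Lemma imset_eqP (T : finType) (f : T -> T) (A B : {set T}) : injective f ->
  f @: A = B <-> forall x, (f x \in B) = (x \in A).
Proof.
move=> f_inj; split=> [<- x|fAB]; first by rewrite mem_imset.
have [g fK gK] := injF_bij f_inj.
by apply/setP=> y; rewrite -[y]gK mem_imset // fAB.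
Qed.

Lemma iter_flip_mem (T : finType) (f : T -> T) (A : {set T}) :
  (forall x, (f x \in A) = (x \notin A)) ->
  forall k x, (iter k f x \in A) = odd k (+) (x \in A).
Proof. by move=> flip; elim=> [|k IH] x //=; rewrite flip IH negb_add. Qed.

Definition residue (n : nat) (t : int) : nat := `|(t %% n%:Z)%Z|%N.

Lemma dvdn_residue n d t : d %| n -> (d %| residue n t) = (d %| `|t|%N).
Proof.
move=> dn; rewrite /residue -(absz_nat d) -!dvdzE [in RHS](divz_eq t n).
by rewrite [in RHS]rpredDl // dvdz_mull // dvdzE.
Qed.

Lemma tau_inj n t : injective (@tau n t).
Proof.
move=> i j /(congr1 val) /= /eqP; rewrite eqn_modDr !modn_small // => /eqP.
exact: val_inj.
Qed.

Lemma iter_tau_val n t (i : 'I_n) k :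
  val (iter k (tau t) i) = (i + k * residue n t) %% n.
Proof.
elim: k => [|k IH]; first by rewrite addn0 modn_small.
by rewrite iterS /= IH modnDml mulSn [residue n t + _]addnC addnA.
Qed.

Lemma mu_inj n q : coprime n q -> injective (@mu n q).
Proof.
move=> co_nq i j /(congr1 val) /= /eqP eq_ij; apply: val_inj.
wlog le_ij : i j eq_ij / i <= j.
  by move=> H; case: (leqP i j) => [|/ltnW] /H -> //; rewrite eq_sym.
move: eq_ij; rewrite eq_sym eqn_mod_dvd ?leq_mul2l ?le_ij ?orbT //.
rewrite -mulnBr Gauss_dvdr // /dvdn modn_small; last by rewrite ltn_subLR ?ltn_addl.
by rewrite subn_eq0 => le_ji; apply/eqP; rewrite eqn_leq le_ij.
Qed.

Lemma mu_invariantE n q (P : {set 'I_n}) : coprime n q ->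
  mu_invariant q P <-> forall i, (mu q i \in P) = (i \in P).
Proof. by move=> /mu_inj; apply: imset_eqP. Qed.

Lemma splits_byE n t (P : {set 'I_n}) :
  splits_by t P <-> forall i, (tau t i \in P) = (i \notin P).
Proof.
rewrite /splits_by partition_setC (imset_eqP _ _ (@tau_inj n t)).
by split=> flip i; [rewrite -[i \in P]flip inE | rewrite inE flip]; rewrite ?negbK.
Qed.

Lemma mu_eq_iter_tau n q t u (i : 'I_n) :
  q * i = i + u * residue n t %[mod n] -> mu q i = iter u (tau t) i.
Proof. by move=> qi; apply: val_inj; rewrite iter_tau_val /= qi. Qed.

Lemma no_typeI_duadic n q t u x : 0 < n -> coprime n q -> odd u ->
  q * x = x + u * residue n t %[mod n] -> ~ typeI_duadic_exists n q t.
Proof.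
move=> n_gt0 co_nq u_odd qx [P [/(mu_invariantE P co_nq) muP /splits_byE tauP]].
pose i : 'I_n := Ordinal (ltn_pmod x n_gt0).
have /mu_eq_iter_tau mu_i : q * i = i + u * residue n t %[mod n].
  by rewrite /= modnMmr modnDml.
by have := muP i; rewrite mu_i (iter_flip_mem tauP) u_odd; case: (i \in P).
Qed.

Lemma ltn_modD_half a m : 0 < m -> ((a + m) %% m.*2 < m) = ~~ (a %% m.*2 < m).
Proof.
move=> m_gt0; rewrite -modnDml.
have : a %% m.*2 < m.*2 by rewrite ltn_pmod ?double_gt0.
move: (a %% m.*2) => r r_lt; case: (ltnP r m) => [r_lt_m | r_ge_m].
  by rewrite modn_small -?addnn ?ltn_add2r // ltnNge leq_addl.
have -> : r + m = r - m + m.*2 by lia.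
by rewrite modnDr modn_small; lia.
Qed.

Lemma modn_double_of_dvdn T m : 0 < m -> m %| T -> ~~ (m.*2 %| T) -> T = m %[mod m.*2].
Proof.
move=> m_gt0 /dvdnP [w ->]; rewrite -mul2n dvdn_pmul2r // dvdn2 negbK => w_odd.
by rewrite -muln_modl // modn2 w_odd mul1n modn_small // ltn_Pmull.
Qed.

Lemma typeI_duadic_exists_half n q t m : 0 < m -> m.*2 %| n -> coprime n q ->
  q = 1 %[mod m.*2] -> residue n t = m %[mod m.*2] -> typeI_duadic_exists n q t.
Proof.
move=> m_gt0 dvd_n co_nq q1 tm; exists [set i : 'I_n | i %% m.*2 < m]; split.
  by apply/mu_invariantE=> // i; rewrite !inE /= modn_dvdm // -modnMml q1 modnMml mul1n.
by apply/splits_byE=> i; rewrite !inE /= modn_dvdm // -modnDmr tm modnDmr ltn_modD_half.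
Qed.

Lemma no_typeI_duadic_of_dvdn v q t : odd q -> 1 < q ->
  2 ^ logn 2 (q - 1) %| residue (2 ^ v) t -> ~ typeI_duadic_exists (2 ^ v) q t.
Proof.
move=> q_odd q_gt1 d_dvd_T.
have q1_gt0 : 0 < q - 1 by rewrite subn_gt0.
have [u] := pfactor_coprime (isT : prime 2) q1_gt0; rewrite coprime2n => u_odd q1E.
set d := 2 ^ _ in d_dvd_T q1E.
apply: (@no_typeI_duadic _ _ _ u (residue (2 ^ v) t %/ d)).
- by rewrite expn_gt0.
- by rewrite coprimeXl ?coprime2n.
- by [].
have qE : q = u * d + 1 by rewrite -q1E subnK // ltnW.
by rewrite qE mulnDl mul1n addnC -mulnA [d * _]mulnC divnK.
Qed.

Theorem corollary3p5 (q v : nat) (t : int) :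
  prime_power q -> odd q -> 1 <= v ->
  ((q%:Z * t)%R = t %[mod (2 ^ v)%:Z])%Z ->
  t != 0%R -> nu2 t < v ->
  (typeI_duadic_exists (2 ^ v) q t <-> nu2 t < logn 2 (q - 1)).
Proof.
move=> [p [k [p_pr [k_gt0 qE]]]] q_odd _ _ t_neq0 s_lt_v.
have q_gt1 : 1 < q by rewrite qE -(expn0 p) ltn_exp2l ?prime_gt1.
rewrite /nu2 in s_lt_v *; set s := logn 2 _ in s_lt_v *.
have t_gt0 : 0 < `|t|%N by rewrite absz_gt0.
have dvd_T : 2 ^ s %| residue (2 ^ v) t.
  by rewrite dvdn_residue ?dvdn_exp2l ?(ltnW s_lt_v) // pfactor_dvdn.
have ndvd_T : ~~ (2 ^ s.+1 %| residue (2 ^ v) t).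
  by rewrite dvdn_residue ?dvdn_exp2l // pfactor_dvdn // ltnn.
split=> [typeI | s_lt_d].
  rewrite ltnNge; apply/negP => d_le_s; apply: no_typeI_duadic_of_dvdn typeI => //.
  exact: dvdn_trans (dvdn_exp2l 2 d_le_s) dvd_T.
have m2E : (2 ^ s).*2 = 2 ^ s.+1 by rewrite -mul2n expnS.
have s_gt0 : 0 < 2 ^ s by rewrite expn_gt0.
apply: (@typeI_duadic_exists_half _ _ _ (2 ^ s)); rewrite ?m2E //.
- exact: dvdn_exp2l.
- by rewrite coprimeXl ?coprime2n.
- by apply/eqP; rewrite eqn_mod_dvd ?(ltnW q_gt1) // pfactor_dvdn // subn_gt0.
- by rewrite -m2E; apply: modn_double_of_dvdn; rewrite ?m2E.
Qed.
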